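(* Let $R$ be a ring with identity, ${}_RM$ a finitely generated semisimple left $R$-module and $\varphi:M\to M$ a nilpotent $R$-endomorphism. Then the centralizer $C_\varphi=\{\psi\in\mathrm{Hom}_R(M,M)\mid\psi\circ\varphi=\varphi\circ\psi\}$, as a $Z(R)$-subalgebra of $\mathrm{Hom}_R(M,M)$, is a homomorphic image (as $Z(R)$-algebras) of the opposite algebra of some $Z(R)$-subalgebra of the matrix algebra $M_{m\times m}(R[t])$, where $m=\dim_R(\ker(\varphi))$.
   Context: $Z(R)$ is the centre of $R$, $R[t]$ the polynomial ring over $R$ in a commuting indeterminate $t$, and $\dim_R$ denotes composition length. *)

From HB Require Import structures.
From mathcomp Require Import all_boot all_order all_algebra.
Set Implicit Arguments. Unset Strict Implicit. Unset Printing Implicit Defensive.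
Import GRing.Theory.
Local Open Scope ring_scope.

Section ModuleDefs.
Variables (R : nzRingType) (M : lmodType R).

Definition is_Rendo (f : M -> M) : Prop :=
  forall (a : R) (x y : M), f (a *: x + y) = a *: f x + f y.

Definition submodule (N : M -> Prop) : Prop :=
  N 0 /\ forall (a : R) (x y : M), N x -> N y -> N (a *: x + y).

Definition subset_of (A B : M -> Prop) : Prop := forall x, A x -> B x.
Definition same_set (A B : M -> Prop) : Prop := forall x, A x <-> B x.

Definition fin_generated : Prop :=
  exists s : seq M, forall x : M, exists r : seq R,
    size r = size s /\ x = \sum_(i < size s) r`_i *: s`_i.

Definition semisimple_module : Prop :=
  forall N, submodule N -> exists K, submodule K /\
    (forall x, N x -> K x -> x = 0) /\
    (forall x, exists n k, N n /\ K k /\ x = n + k).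

Definition comp_length (N : M -> Prop) (m : nat) : Prop :=
  exists s : nat -> M -> Prop,
    (forall i, submodule (s i)) /\
    same_set (s 0%N) (fun x => x = 0) /\
    same_set (s m) N /\
    (forall i, (i < m)%N ->
       subset_of (s i) (s i.+1) /\ ~ subset_of (s i.+1) (s i) /\
       (forall K, submodule K -> subset_of (s i) K -> subset_of K (s i.+1) ->
          same_set K (s i) \/ same_set K (s i.+1))).

Definition nilpotent_map (f : M -> M) : Prop :=
  exists n : nat, forall x, iter n f x = 0.

End ModuleDefs.

Definition central (R : nzRingType) (c : R) : Prop := forall r : R, c * r = r * c.

Definition cscale_mx (R : nzRingType) (m : nat) (c : R) (A : 'M[{poly R}]_m) :=
  map_mx (fun p => c%:P * p) A.

Definition ZR_subalgebra (R : nzRingType) (m : nat) (S : 'M[{poly R}]_m -> Prop) : Prop :=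
  S 0 /\ S 1%:M /\
  (forall A B, S A -> S B -> S (A + B)) /\
  (forall A B, S A -> S B -> S (A *m B)) /\
  (forall c A, central c -> S A -> S (cscale_mx c A)).

(* Let [t] act on [M] as [phi], so that [M] is an [R[t]]-module.  If [m] vectors span
   [ker phi] along a composition series, then [M] is generated over [R[t]] by [m]
   elements [g_i]: by induction on the nilpotency index, generators of [phi M] lift
   along [phi], and the part of [ker phi] missed by [phi M] is supplied by the
   complementary vectors obtained by exchanging the composition series against [phi M].
   So [M] is [R[t]^m] modulo the kernel [K] of [v |-> sum_i v_i g_i].  An endomorphism
   commuting with [phi] is [R[t]]-linear, hence lifts to right multiplication by a
   matrix stabilising [K]; conversely every such matrix induces one.  Acting on the
   right reverses products, whence the opposite algebra. *)

From HB Require Import structures.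
From mathcomp Require Import all_boot all_order all_algebra.
From Stdlib Require Import Classical ClassicalEpsilon.
Import GRing.Theory.
Local Open Scope ring_scope.

Set Implicit Arguments.
Unset Strict Implicit.
Unset Printing Implicit Defensive.

Section Submodules.
Variables (R : nzRingType) (M : lmodType R).

Definition Rendo_linear (f : M -> M) (fR : is_Rendo f) : {linear M -> M} :=
  HB.pack f (GRing.isLinear.Build R M M *:%R f fR).

Section Rendo.
Variables (f : M -> M) (fR : is_Rendo f).

Lemma rendo0 : f 0 = 0. Proof. exact: (raddf0 (Rendo_linear fR)). Qed.
Lemma rendoD x y : f (x + y) = f x + f y. Proof. exact: (raddfD (Rendo_linear fR)). Qed.
Lemma rendoB x y : f (x - y) = f x - f y. Proof. exact: (raddfB (Rendo_linear fR)). Qed.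
Lemma rendoZ a x : f (a *: x) = a *: f x. Proof. exact: (linearZZ (Rendo_linear fR)). Qed.
Lemma rendo_sum n (F : 'I_n -> M) : f (\sum_i F i) = \sum_i f (F i).
Proof. exact: (raddf_sum (Rendo_linear fR)). Qed.

End Rendo.

Lemma rendo_iter (f : M -> M) n : is_Rendo f -> is_Rendo (iter n f).
Proof. by move=> fR; elim: n => [|n IHn] a x y //=; rewrite IHn fR. Qed.

Section Submodule.
Variables (N : M -> Prop) (subN : submodule N).

Lemma submodule0 : N 0. Proof. exact: subN.1. Qed.
Lemma submoduleD x y : N x -> N y -> N (x + y).
Proof. by move=> Nx Ny; rewrite -[x]scale1r; apply: subN.2. Qed.
Lemma submoduleZ a x : N x -> N (a *: x).
Proof. by move=> Nx; rewrite -[a *: x]addr0; apply: subN.2 => //; apply: submodule0. Qed.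
Lemma submoduleB x y : N x -> N y -> N (x - y).
Proof. by move=> Nx Ny; rewrite -scaleN1r; apply: submoduleD => //; apply: submoduleZ. Qed.

End Submodule.

Fixpoint span (xs : seq M) : M -> Prop :=
  if xs is y :: ys then fun x => exists a z, span ys z /\ x = a *: y + z
  else fun x => x = 0.

Lemma submodule_span xs : submodule (span xs).
Proof.
elim: xs => [|y ys [span0 spanP]] /=; first by split=> // a x z -> ->; rewrite scaler0 addr0.
split; first by exists 0, 0; rewrite scale0r addr0.
move=> a _ _ [b [z [Hz ->]]] [b' [z' [Hz' ->]]].
exists (a * b + b'), (a *: z + z'); split; first exact: spanP.
by rewrite scalerDr scalerA scalerDl addrACA.
Qed.

Lemma span_head y ys : span (y :: ys) y.
Proof. by exists 1, 0; rewrite scale1r addr0; split=> //; apply: submodule0 (submodule_span ys). Qed.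

Lemma span_tail y ys z : span ys z -> span (y :: ys) z.
Proof. by exists 0, z; rewrite scale0r add0r. Qed.

(* [B / A] is a simple module; [A] is not required to lie in [B]. *)
Definition simple_factor (A B : M -> Prop) :=
  ~ subset_of B A /\ forall L, submodule L -> subset_of A L -> subset_of L B ->
     same_set L A \/ same_set L B.

Lemma simple_factor_same A A' B B' :
  same_set A' A -> same_set B' B -> simple_factor A B -> simple_factor A' B'.
Proof.
move=> eqA eqB [BA maxAB]; split=> [B'A'|L subL A'L LB'].
  by apply: BA => x Bx; apply/(eqA x).1/B'A'/(eqB x).2.
have [eqLA|eqLB] := maxAB L subL (fun x Ax => A'L x ((eqA x).2 Ax)) (fun x Lx => (eqB x).1 (LB' x Lx)).
  by left=> x; rewrite eqLA eqA.
by right=> x; rewrite eqLB eqB.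
Qed.

Lemma simple_factor_meet (T A B : M -> Prop) :
  submodule T -> submodule A -> submodule B -> subset_of A B -> simple_factor A B ->
  (exists y, T y /\ B y /\ ~ A y) ->
  simple_factor (fun x => T x /\ A x) (fun x => T x /\ B x).
Proof.
move=> subT subA subB AB [_ maxAB] [y [Ty [By nAy]]]; split=> [TBTA|L subL TAL LTB].
  by apply: nAy; have [] := TBTA y (conj Ty By).
pose LA x := exists l a, L l /\ A a /\ x = l + a.
have subLA : submodule LA.
  split; first by exists 0, 0; split; [apply: submodule0 subL|split; [apply: submodule0 subA|rewrite addr0]].
  move=> c _ _ [l [a [Ll [Aa ->]]]] [l' [a' [Ll' [Aa' ->]]]].
  exists (c *: l + l'), (c *: a + a'); rewrite scalerDr addrACA.
  by split; [apply: subL.2|split; [apply: subA.2|]].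
have ALA : subset_of A LA.
  by move=> x Ax; exists 0, x; rewrite add0r; split=> //; apply: submodule0.
have LLA : subset_of L LA.
  by move=> x Lx; exists x, 0; rewrite addr0; split=> //; split=> //; apply: submodule0.
have LAB : subset_of LA B.
  by move=> _ [l [a [/LTB [_ Bl] [/AB Ba ->]]]]; apply: submoduleD.
have [eqLA|eqLB] := maxAB LA subLA ALA LAB.
- by left=> x; split=> [Lx|/TAL //]; split; [have [] := LTB x Lx|apply/eqLA/LLA].
- right=> x; split=> [/LTB //|[Tx /eqLB [l [a [Ll [Aa Ex]]]]]].
  have Ta : T a.
    rewrite (_ : a = x - l); last by rewrite Ex addrC addKr.
    by apply: submoduleB => //; have [] := LTB l Ll.
  by rewrite Ex; apply: submoduleD => //; apply: TAL.
Qed.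


Fixpoint composition_seq (xs : seq M) : Prop :=
  if xs is y :: ys then composition_seq ys /\ simple_factor (span ys) (span (y :: ys))
  else True.

Lemma comp_length_composition_seq N m : comp_length N m ->
  exists xs, size xs = m /\ composition_seq xs /\ same_set (span xs) N.
Proof.
move=> [s [subs [s0 [sm sfs]]]].
suff /(_ m (leqnn m)) [xs [sz [cxs eqxs]]] : forall i, (i <= m)%N ->
    exists xs, size xs = i /\ composition_seq xs /\ same_set (span xs) (s i).
  by exists xs; do 2?split=> //; move=> x; rewrite eqxs sm.
elim=> [|i IHi] lt_im; first by exists [::]; do 2?split=> //; move=> x; rewrite s0.
have [xs [sz [cxs eqxs]]] := IHi (ltnW lt_im).
have [sub_si [nsub maxs]] := sfs i lt_im.
have [x [Sx nSx]] : exists x, s i.+1 x /\ ~ s i x.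
  by apply: NNPP => nx; apply: nsub => x Sx; apply: NNPP => nSx; apply: nx; exists x.
have eqxxs : same_set (span (x :: xs)) (s i.+1).
  have [|| eqi | //] := maxs _ (submodule_span (x :: xs)).
  - by move=> z /(eqxs z).2; apply: span_tail.
  - by move=> _ [a [w [/(eqxs w).1 /sub_si Sw ->]]]; apply: (subs i.+1).2.
  - by case: nSx; apply/(eqi x).1/span_head.
exists (x :: xs); split; first by rewrite /= sz.
do 2?split=> //; apply: simple_factor_same eqxs eqxxs _.
by split=> // L subL; apply: maxs.
Qed.

Lemma simple_factor_exchange x y xs : simple_factor (span xs) (span (x :: xs)) ->
  span (x :: xs) y -> ~ span xs y -> same_set (span (y :: xs)) (span (x :: xs)).
Proof.
move=> [_ maxx] Sy nSy; have [|| eqxs | //] := maxx _ (submodule_span (y :: xs)).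
- exact: span_tail.
- by move=> _ [a [w [Sw ->]]]; apply: (submodule_span _).2 => //; apply: span_tail.
- by have /eqxs := span_head y xs.
Qed.

Lemma span_cons_meet (T : M -> Prop) y xs ys : submodule T -> T y ->
  same_set (span ys) (fun x => T x /\ span xs x) ->
  same_set (span (y :: ys)) (fun x => T x /\ span (y :: xs) x).
Proof.
move=> subT Ty eqys z; split=> [[a [w [/eqys [Tw Sw] ->]]]|[Tz [a [w [Sw Ez]]]]].
  by split; [apply: subT.2|exists a, w].
exists a, w; split=> //; apply/eqys; split=> //.
by rewrite (_ : w = z - a *: y); [apply: submoduleB; last apply: submoduleZ|rewrite Ez addrC addKr].
Qed.

Lemma composition_seq_meet (T : M -> Prop) xs : submodule T -> composition_seq xs ->
  exists ys zs, composition_seq ys /\ same_set (span ys) (fun x => T x /\ span xs x) /\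
    (size ys + size zs = size xs)%N /\ (forall z, z \in zs -> span xs z) /\
    (forall x, span xs x -> exists t u, T t /\ span zs u /\ x = t + u).
Proof.
move=> subT; elim: xs => [|x xs IHxs] /=.
  move=> _; exists [::], [::]; split=> //; split.
    by move=> x; split=> [->|[]//]; split=> //; apply: submodule0.
  do 2?split=> //.
  by move=> z ->; exists 0, 0; rewrite addr0; split=> //; apply: submodule0.
move=> [cxs fxs]; have [ys [zs [cys [eqys [sz [zsS cover]]]]]] := IHxs cxs.
have [[y [Ty [Sy nSy]]]|noy] := classic (exists y, T y /\ span (x :: xs) y /\ ~ span xs y).
- have exch := simple_factor_exchange fxs Sy nSy.
  have eqyys : same_set (span (y :: ys)) (fun z => T z /\ span (x :: xs) z).
    by move=> z; rewrite (span_cons_meet subT Ty eqys) exch.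
  exists (y :: ys), zs; split; [|split; [exact: eqyys|split; [|split]]].
  + split=> //; apply: simple_factor_same eqys eqyys _.
    apply: (simple_factor_meet subT (submodule_span xs) (submodule_span (x :: xs))) => //.
      exact: span_tail.
    by exists y.
  + by rewrite /= addSn sz.
  + by move=> z /zsS; apply: span_tail.
  + move=> _ /exch [a [w [/cover [t [u [Tt [Zu ->]]]] ->]]].
    by exists (a *: y + t), u; rewrite addrA; split=> //; apply: subT.2.
- exists ys, (x :: zs); split; [|split; [|split; [|split]]] => //.
  + move=> z; rewrite eqys; split=> [[Tz Sz]|[Tz Sz]]; first by split=> //; apply: span_tail.
    by split=> //; apply: NNPP => nSz; apply: noy; exists z.
  + by rewrite /= addnS sz.
  + by move=> z; rewrite inE => /predU1P [->|/zsS]; [apply: span_head|apply: span_tail].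
  + move=> _ [a [w [/cover [t [u [Tt [Zu ->]]]] ->]]].
    by exists t, (a *: x + u); rewrite addrCA; split=> //; split=> //; exists a, u.
Qed.

End Submodules.

Section PolynomialAction.
Variables (R : nzRingType) (M : lmodType R) (phi : M -> M).
Hypothesis phiR : is_Rendo phi.

Definition pact (p : {poly R}) (x : M) := \sum_(i < size p) p`_i *: iter i phi x.

Lemma pact_widen n (p : {poly R}) (x : M) :
  (size p <= n)%N -> pact p x = \sum_(i < n) p`_i *: iter i phi x.
Proof.
move=> le_pn; rewrite /pact (big_ord_widen n (fun i => p`_i *: iter i phi x) le_pn).
rewrite big_mkcond /=; apply: eq_bigr => i _; case: ltnP => // le_pi.
by rewrite nth_default // scale0r.
Qed.

Lemma pact0l x : pact 0 x = 0.
Proof. by rewrite /pact size_poly0 big_ord0. Qed.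

Lemma pactDl p q x : pact (p + q) x = pact p x + pact q x.
Proof.
pose n := maxn (size p) (size q).
rewrite (@pact_widen n _ _ (size_polyD _ _)) (@pact_widen n p _ (leq_maxl _ _)).
rewrite (@pact_widen n q _ (leq_maxr _ _)) -big_split /=.
by apply: eq_bigr => i _; rewrite coefD scalerDl.
Qed.

Lemma pact_suml n (F : 'I_n -> {poly R}) x : pact (\sum_i F i) x = \sum_i pact (F i) x.
Proof. by elim/big_rec2: _ => [|i y1 y2 _ <-]; rewrite ?pact0l ?pactDl. Qed.

Lemma pactC c x : pact c%:P x = c *: x.
Proof. by rewrite (@pact_widen 1 _ _ (size_polyC_leq1 c)) big_ord1 /= coefC. Qed.

Lemma pactCM c p x : pact (c%:P * p) x = c *: pact p x.
Proof.
rewrite (@pact_widen (size p)) /pact ?scaler_sumr; last first.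
  by rewrite (leq_trans (size_polyMleq _ _)) // -subn1 leq_subLR leq_add2r size_polyC_leq1.
by apply: eq_bigr => i _; rewrite coefCM scalerA.
Qed.

Lemma pactMX p x : pact (p * 'X) x = pact p (phi x).
Proof.
rewrite (@pact_widen (size p).+1); last first.
  by rewrite (leq_trans (size_polyMleq _ _)) // size_polyX addn2.
rewrite big_ord_recl coefMX eqxx scale0r add0r /pact; apply: eq_bigr => i _.
by rewrite coefMX /= add0n -iterSr iterS.
Qed.

Lemma pact0r p : pact p 0 = 0.
Proof. by rewrite /pact big1 // => i _; rewrite (rendo0 (rendo_iter _ phiR)) scaler0. Qed.

Lemma pactDr p x y : pact p (x + y) = pact p x + pact p y.
Proof.
rewrite /pact -big_split /=; apply: eq_bigr => i _.
by rewrite (rendoD (rendo_iter _ phiR)) scalerDr.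
Qed.

Lemma pact_sumr p n (F : 'I_n -> M) : pact p (\sum_i F i) = \sum_i pact p (F i).
Proof. by elim/big_rec2: _ => [|i y1 y2 _ <-]; rewrite ?pact0r ?pactDr. Qed.

Lemma pact_comm (psi : M -> M) : is_Rendo psi -> (forall x, psi (phi x) = phi (psi x)) ->
  forall p x, psi (pact p x) = pact p (psi x).
Proof.
move=> psiR psi_phi p x; rewrite /pact (rendo_sum psiR); apply: eq_bigr => i _.
by rewrite (rendoZ psiR); congr (_ *: _); elim: (nat_of_ord i) => //= k <-.
Qed.

Lemma pact_phi p x : pact p (phi x) = phi (pact p x).
Proof. by rewrite (pact_comm phiR). Qed.

Lemma pactM p q x : pact (p * q) x = pact p (pact q x).
Proof.
elim/poly_ind: p x => [|p c IHp] x; first by rewrite mul0r !pact0l.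
rewrite mulrDl -mulrA -commr_polyX mulrA pactDl pactMX IHp.
by rewrite pactDl pactMX pactCM pactC pact_phi.
Qed.

Definition phi_stable (N : M -> Prop) := forall x, N x -> N (phi x).

Definition phi_image (N : M -> Prop) y := exists x, N x /\ y = phi x.

Section StableSubmodule.
Variables (N : M -> Prop) (subN : submodule N) (stN : phi_stable N).

Lemma submodule_phi_image : submodule (phi_image N).
Proof.
split; first by exists 0; rewrite (rendo0 phiR); split=> //; apply: submodule0.
move=> a _ _ [x [Nx ->]] [y [Ny ->]]; exists (a *: x + y); rewrite phiR.
by split=> //; apply: subN.2.
Qed.

Lemma phi_image_stable : phi_stable (phi_image N).
Proof. by move=> _ [x [Nx ->]]; exists (phi x); split=> //; apply: stN. Qed.

Lemma phi_image_sub : subset_of (phi_image N) N.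
Proof. by move=> _ [x [Nx ->]]; apply: stN. Qed.

Lemma pact_stable p x : N x -> N (pact p x).
Proof.
move=> Nx; rewrite /pact; elim/big_rec: _ => [|i y _ Ny]; first exact: submodule0.
by apply: subN.2 => //; elim: (nat_of_ord i) => //= k; apply: stN.
Qed.

End StableSubmodule.

Fixpoint pspan (xs : seq M) : M -> Prop :=
  if xs is y :: ys then fun x => exists p z, pspan ys z /\ x = pact p y + z
  else fun x => x = 0.

Lemma submodule_pspan xs : submodule (pspan xs).
Proof.
elim: xs => [|y ys [pspan0 pspanP]] /=; first by split=> // a x z -> ->; rewrite scaler0 addr0.
split; first by exists 0, 0; rewrite pact0l addr0.
move=> a _ _ [p [z [Hz ->]]] [q [z' [Hz' ->]]].
exists (a%:P * p + q), (a *: z + z'); split; first exact: pspanP.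
by rewrite scalerDr pactDl pactCM addrACA.
Qed.

Lemma pspan_stable N gs : submodule N -> phi_stable N ->
  (forall g, g \in gs -> N g) -> subset_of (pspan gs) N.
Proof.
move=> subN stN; elim: gs => [|g gs IHgs] Ngs x /=; first by move->; apply: submodule0.
move=> [p [z [Hz ->]]]; apply: submoduleD => //.
  by apply: pact_stable => //; apply: Ngs; apply: mem_head.
by apply: IHgs => // h Hh; apply: Ngs; rewrite inE Hh orbT.
Qed.

Lemma span_pspan zs : subset_of (span zs) (pspan zs).
Proof.
elim: zs => [|z zs IHzs] x //= [a [w [Hw ->]]].
by exists a%:P, w; rewrite pactC; split=> //; apply: IHzs.
Qed.

Lemma pspan_cat gs zs a b : pspan gs a -> span zs b -> pspan (gs ++ zs) (a + b).
Proof.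
elim: gs a => [|g gs IHgs] a /=; first by move=> -> /span_pspan; rewrite add0r.
by move=> [p [z [Hz ->]]] Hb; exists p, (z + b); rewrite addrA; split=> //; apply: IHgs.
Qed.

(* [h = pact 'X g] for a [phi]-preimage [g] of [h]. *)
Lemma pspan_lift N hs : (forall h, h \in hs -> phi_image N h) ->
  exists gs, size gs = size hs /\ (forall g, g \in gs -> N g) /\
   (forall x, pspan hs x -> pspan gs x /\ exists w, pspan gs w /\ x = phi w).
Proof.
elim: hs => [|h hs IHhs] Nhs.
  exists [::]; split=> //; split=> // _ ->; split=> //.
  by exists 0; rewrite (rendo0 phiR).
have [g [Ng Eh]] := Nhs h (mem_head h hs).
have [gs [sz [Ngs lift]]] := IHhs (fun h' Hh' => Nhs h' (@mem_behead _ (h :: hs) _ Hh')).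
exists (g :: gs); split; first by rewrite /= sz.
split; first by move=> g'; rewrite inE => /predU1P [->|/Ngs].
move=> _ [p [z [/lift [Pz [w [Pw Ez]]] ->]]]; split.
  by exists (p * 'X), z; rewrite pactMX -Eh.
by exists (pact p g + w); rewrite (rendoD phiR) Eh pact_phi Ez; split=> //; exists p, w.
Qed.

Lemma pspan_cat_lift N gs zs : submodule N -> phi_stable N -> (forall g, g \in gs -> N g) ->
  (forall y, phi_image N y -> pspan gs y /\ exists w, pspan gs w /\ y = phi w) ->
  (forall x, N x -> phi x = 0 -> exists t u, phi_image N t /\ span zs u /\ x = t + u) ->
  subset_of N (pspan (gs ++ zs)).
Proof.
move=> subN stN Ngs lift cover x Nx.
have [_ [w [Pw phix]]] : pspan gs (phi x) /\ exists w, pspan gs w /\ phi x = phi w.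
  by apply: lift; exists x.
have Nw : N w by apply: pspan_stable Pw.
have [t [u [/lift [Pt _] [Zu Exw]]]] : exists t u, phi_image N t /\ span zs u /\ x - w = t + u.
  by apply: cover; [apply: submoduleB|rewrite (rendoB phiR) phix subrr].
rewrite (_ : x = (w + t) + u); last by rewrite -addrA -Exw addrC subrK.
by apply: pspan_cat => //; apply: submoduleD (submodule_pspan gs) _ _ Pw Pt.
Qed.

Lemma nilpotent_pspan_generators n N xs : submodule N -> phi_stable N ->
  (forall x, N x -> iter n phi x = 0) -> composition_seq xs ->
  same_set (span xs) (fun x => N x /\ phi x = 0) ->
  exists gs, size gs = size xs /\ (forall g, g \in gs -> N g) /\ subset_of N (pspan gs).
Proof.
elim: n N xs => [|n IHn] N xs subN stN nilN cxs eqxs.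
  exists (nseq (size xs) 0); rewrite size_nseq; split=> //; split.
    by move=> g /nseqP [-> _]; apply: submodule0.
  by move=> x /nilN /= ->; apply: submodule0 (submodule_pspan _).
have [ys [zs [cys [eqys [sz [zsS cover]]]]]] :=
  composition_seq_meet (submodule_phi_image subN) cxs.
have eqys' : same_set (span ys) (fun y => phi_image N y /\ phi y = 0).
  move=> y; rewrite eqys eqxs; split=> [[? []]|[Iy ?]]; do ?split=> //.
  exact: phi_image_sub.
have nilI : forall y, phi_image N y -> iter n phi y = 0.
  by move=> _ [x [Nx ->]]; rewrite -iterSr; apply: nilN.
have [hs [szh [Nhs genh]]] := IHn _ _ (submodule_phi_image subN) (phi_image_stable stN)
  nilI cys eqys'.
have [gs [szg [Ngs lift]]] := pspan_lift Nhs.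
exists (gs ++ zs); split; first by rewrite size_cat szg szh sz.
split; first by move=> g; rewrite mem_cat => /orP [/Ngs //|/zsS /eqxs []].
apply: pspan_cat_lift => // [y /genh /lift //|x Nx phix0].
by apply: cover; apply/eqxs.
Qed.

End PolynomialAction.

Lemma mul_cscale_mx (R : nzRingType) m (c : R) (v : 'rV[{poly R}]_m) (A : 'M_m) :
  central c -> v *m cscale_mx c A = c%:P *: (v *m A).
Proof.
move=> cc; apply/rowP => j; rewrite !mxE mulr_sumr; apply: eq_bigr => k _.
have cPc : forall p : {poly R}, p * c%:P = c%:P * p.
  by move=> p; apply/polyP => i; rewrite coefMC coefCM cc.
by rewrite mxE mulrA cPc mulrA.
Qed.

Section Presentation.
Variables (R : nzRingType) (M : lmodType R) (phi : M -> M) (m : nat) (g : 'I_m -> M).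
Hypothesis phiR : is_Rendo phi.

Definition pcomb (v : 'rV[{poly R}]_m) := \sum_i pact phi (v ord0 i) (g i).

Lemma pcombD v w : pcomb (v + w) = pcomb v + pcomb w.
Proof. by rewrite /pcomb -big_split /=; apply: eq_bigr => i _; rewrite mxE pactDl. Qed.

Lemma pcombB v w : pcomb (v - w) = pcomb v - pcomb w.
Proof. by apply/eqP; rewrite eq_sym subr_eq -pcombD subrK. Qed.

Lemma pcombZC c v : pcomb (c%:P *: v) = c *: pcomb v.
Proof. by rewrite /pcomb scaler_sumr; apply: eq_bigr => i _; rewrite mxE pactCM. Qed.

Lemma pcombZX v : pcomb ('X *: v) = phi (pcomb v).
Proof.
rewrite /pcomb (rendo_sum phiR); apply: eq_bigr => i _.
by rewrite mxE -commr_polyX pactMX pact_phi.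
Qed.

Lemma pcomb_mul v (A : 'M_m) : pcomb (v *m A) = \sum_i pact phi (v ord0 i) (pcomb (row i A)).
Proof.
rewrite /pcomb; under eq_bigr do rewrite mxE pact_suml.
rewrite exchange_big /=; apply: eq_bigr => i _.
by rewrite pact_sumr //; apply: eq_bigr => j _; rewrite mxE pactM.
Qed.

Hypothesis pcomb_onto : forall x, exists v, x = pcomb v.

Definition coords x : 'rV_m := proj1_sig (constructive_indefinite_description _ (pcomb_onto x)).

Lemma coordsK x : pcomb (coords x) = x.
Proof. by rewrite /coords; case: constructive_indefinite_description. Qed.

(* The matrices acting on [R[t]^m] (on the right) that descend to [M = R[t]^m / ker pcomb]. *)
Definition kernel_stable (A : 'M_m) := forall v, pcomb v = 0 -> pcomb (v *m A) = 0.

Definition induced_endo (A : 'M_m) x := pcomb (coords x *m A).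

Lemma induced_endo_pcomb A v : kernel_stable A -> induced_endo A (pcomb v) = pcomb (v *m A).
Proof.
move=> stA; apply/eqP; rewrite -subr_eq0 -pcombB -mulmxBl; apply/eqP/stA.
by rewrite pcombB coordsK subrr.
Qed.

Lemma kernel_stable_subalgebra : ZR_subalgebra kernel_stable.
Proof.
split; first by move=> v _; rewrite mulmx0 /pcomb big1 // => i _; rewrite mxE pact0l.
split; first by move=> v; rewrite mulmx1.
split; first by move=> A B stA stB v v0; rewrite mulmxDr pcombD stA // stB // addr0.
split; first by move=> A B stA stB v v0; rewrite mulmxA; apply/stB/stA.
by move=> c A cc stA v v0; rewrite mul_cscale_mx // pcombZC stA // scaler0.
Qed.

Section InducedEndo.
Variables (A : 'M_m) (stA : kernel_stable A).

Lemma induced_endo_Rendo : is_Rendo (induced_endo A).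
Proof.
move=> a x y; rewrite -[in LHS](coordsK x) -[in LHS](coordsK y) -pcombZC -pcombD.
by rewrite induced_endo_pcomb // mulmxDl -scalemxAl pcombD pcombZC.
Qed.

Lemma induced_endo_phi x : induced_endo A (phi x) = phi (induced_endo A x).
Proof. by rewrite -[in LHS](coordsK x) -pcombZX induced_endo_pcomb // -scalemxAl pcombZX. Qed.

End InducedEndo.

Lemma induced_endo1 x : induced_endo 1%:M x = x.
Proof. by rewrite /induced_endo mulmx1 coordsK. Qed.

Lemma induced_endoD A B x : induced_endo (A + B) x = induced_endo A x + induced_endo B x.
Proof. by rewrite /induced_endo mulmxDr pcombD. Qed.

Lemma induced_endoM A B x :
  kernel_stable B -> induced_endo (A *m B) x = induced_endo B (induced_endo A x).
Proof. by move=> stB; rewrite induced_endo_pcomb // /induced_endo mulmxA. Qed.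

Lemma induced_endoZ c A x : central c -> induced_endo (cscale_mx c A) x = c *: induced_endo A x.
Proof. by move=> cc; rewrite /induced_endo mul_cscale_mx // pcombZC. Qed.

(* Commuting with [phi], [psi] is [R[t]]-linear, so it is determined by the [psi (g i)]. *)
Lemma induced_endo_onto psi : is_Rendo psi -> (forall x, psi (phi x) = phi (psi x)) ->
  exists A, kernel_stable A /\ forall x, induced_endo A x = psi x.
Proof.
move=> psiR psi_phi; pose A := \matrix_(i, j) coords (psi (g i)) ord0 j.
have rowA i : pcomb (row i A) = psi (g i).
  by rewrite -[RHS]coordsK; congr pcomb; apply/rowP => j; rewrite !mxE.
have pcombA v : pcomb (v *m A) = psi (pcomb v).
  rewrite pcomb_mul (rendo_sum psiR); apply: eq_bigr => i _.
  by rewrite rowA (pact_comm psiR psi_phi).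
exists A; split; first by move=> v v0; rewrite pcombA v0 (rendo0 psiR).
by move=> x; rewrite /induced_endo pcombA coordsK.
Qed.

End Presentation.

Lemma pspan_pcomb (R : nzRingType) (M : lmodType R) (phi : M -> M) gs x : pspan phi gs x ->
  exists v : 'rV_(size gs), x = pcomb phi (fun i => gs`_i) v.
Proof.
move=> Px; suff [r ->] : exists r : seq {poly R}, x = \sum_(i < size gs) pact phi r`_i gs`_i.
  by exists (\row_i r`_i); apply: eq_bigr => i _; rewrite mxE.
elim: gs x Px => [|g gs IHgs] x /=; first by move->; exists [::]; rewrite big_ord0.
by move=> [p [z [/IHgs [r ->] ->]]]; exists (p :: r); rewrite big_ord_recl.
Qed.

Unset Implicit Arguments.

Theorem theorem4p4 (R : nzRingType) (M : lmodType R) (phi : M -> M) (m : nat) :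
  fin_generated M -> semisimple_module M ->
  is_Rendo phi -> nilpotent_map phi ->
  comp_length (fun x => phi x = 0) m ->
  exists (S : 'M[{poly R}]_m -> Prop) (f : 'M[{poly R}]_m -> M -> M),
    ZR_subalgebra S /\
    (* f maps S into the centralizer C_phi *)
    (forall A, S A -> is_Rendo (f A) /\ forall x, f A (phi x) = phi (f A x)) /\
    (* f is onto C_phi *)
    (forall psi : M -> M, is_Rendo psi -> (forall x, psi (phi x) = phi (psi x)) ->
       exists A, S A /\ forall x, f A x = psi x) /\
    (* f is a Z(R)-algebra homomorphism from the opposite algebra S^op *)
    (forall x, f 1%:M x = x) /\
    (forall A B, S A -> S B -> forall x, f (A + B) x = f A x + f B x) /\
    (forall A B, S A -> S B -> forall x, f (A *m B) x = f B (f A x)) /\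
    (forall c A, central c -> S A -> forall x, f (cscale_mx c A) x = c *: f A x).
Proof.
move=> _ _ phiR [n nil_phi] /comp_length_composition_seq [xs [<- [cxs eqxs]]].
have subM : submodule (fun _ : M => True) by [].
have eqker : same_set (span xs) (fun x => True /\ phi x = 0).
  by move=> x; rewrite eqxs; split=> [|[]].
have [gs [<- [_ genM]]] := nilpotent_pspan_generators phiR subM (fun x _ => I)
  (fun x _ => nil_phi x) cxs eqker.
pose g i := gs`_(@nat_of_ord (size gs) i).
have onto x : exists v, x = pcomb phi g v by apply: pspan_pcomb; apply: genM.
exists (kernel_stable phi g), (induced_endo onto).
split; first exact: kernel_stable_subalgebra.
split; first by move=> A stA; split; [apply: induced_endo_Rendo|apply: induced_endo_phi].
split; first exact: induced_endo_onto.
split; first exact: induced_endo1.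
split; first by move=> A B _ _; apply: induced_endoD.
split; first by move=> A B _ stB x; apply: (induced_endoM onto).
by move=> c A cc _ x; apply: (induced_endoZ onto).
Qed.
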